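(* Let $N=2m+1$ be an odd integer with $N\ge3$. There exist $\varphi,\psi\in\mathbb{C}^N$ such that there is no $c\in\mathbb{C}$ with $|c|=1$ and $\psi=c\varphi$, while for all $k=0,\ldots,2N-3$, $$\Big|P_\varphi\Big(\tfrac{k}{2N-2}\Big)\Big|=\Big|P_\psi\Big(\tfrac{k}{2N-2}\Big)\Big|$$ and $$\Big|P_\varphi\Big(\tfrac{k}{2N-2}\Big)-P_\varphi\Big(\tfrac{k-1}{2N-2}\Big)\Big|=\Big|P_\psi\Big(\tfrac{k}{2N-2}\Big)-P_\psi\Big(\tfrac{k-1}{2N-2}\Big)\Big|.$$
   Context: For $\psi=(\psi_0,\ldots,\psi_{N-1})\in\mathbb{C}^N$, $P_\psi(x)=\sum_{j=0}^{N-1}\psi_je^{2i\pi jx}$ for $x\in\mathbb{R}$ (a $1$-periodic function). *)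

From Stdlib Require Import Reals.
From Coquelicot Require Import Coquelicot.
Open Scope R_scope.

Definition e2ipi (x : R) : C := (cos (2 * PI * x), sin (2 * PI * x)).

Fixpoint csum (n : nat) (f : nat -> C) : C :=
  match n with
  | O => 0%C
  | S n' => Cplus (csum n' f) (f n')
  end.

(* A vector psi in C^N is represented by psi : nat -> C, only the entries
   psi 0, ..., psi (N-1) being relevant.
   P_psi(x) = sum_{j=0}^{N-1} psi_j e^{2 i pi j x}. *)
Definition P (N : nat) (psi : nat -> C) (x : R) : C :=
  csum N (fun j => Cmult (psi j) (e2ipi (INR j * x))).

(* Take phi = 1 + b z^(2m) and psi = 1 + conj(b) z^(2m) with b non-real, which are
   not unimodular multiples of each other.  At the sample points x = k/(4m) the
   monomial e^(2 i pi 2m x) = e^(i pi k) = ±1 is real, so P_psi(x) is the complex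
   conjugate of P_phi(x); and any difference P(x) - P(y) equals b (resp. conj(b))
   times the same number, so only |b| = |conj(b)| enters its modulus. *)

From Stdlib Require Import Reals Lra Lia.
From Coquelicot Require Import Coquelicot.
Open Scope R_scope.

Lemma sin_INR_mult_PI (k : nat) : sin (INR k * PI) = 0.
Proof.
  induction k as [|k IH].
  - rewrite Rmult_0_l. apply sin_0.
  - rewrite S_INR, Rmult_plus_distr_r, Rmult_1_l, neg_sin, IH. ring.
Qed.

Lemma e2ipi_half_INR (k : nat) : e2ipi (INR k / 2) = RtoC (cos (INR k * PI)).
Proof.
  unfold e2ipi. replace (2 * PI * (INR k / 2)) with (INR k * PI) by field.
  rewrite sin_INR_mult_PI. reflexivity.
Qed.

Lemma csum_head (n : nat) (f : nat -> C) :
  (forall j, (0 < j < n)%nat -> f j = 0%C) -> (1 <= n)%nat -> csum n f = f 0%nat.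
Proof.
  intros Hf Hn. induction n as [|n IH]; [lia|].
  destruct n as [|n].
  - simpl. apply Cplus_0_l.
  - change (csum (S (S n)) f) with (Cplus (csum (S n) f) (f (S n))).
    rewrite IH, (Hf (S n)) by (intros; try apply Hf; lia).
    apply Cplus_0_r.
Qed.

Definition endpoint_vec (m : nat) (b : C) (j : nat) : C :=
  if Nat.eqb j 0 then 1%C else if Nat.eqb j (2 * m) then b else 0%C.

Lemma P_endpoint_vec (m : nat) (b : C) (x : R) : (1 <= m)%nat ->
  P (2 * m + 1) (endpoint_vec m b) x = Cplus 1 (Cmult b (e2ipi (INR (2 * m) * x))).
Proof.
  intros hm. unfold P. replace (2 * m + 1)%nat with (S (2 * m)) by lia.
  change (csum (S (2 * m)) ?f) with (Cplus (csum (2 * m) f) (f (2 * m)%nat)).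
  rewrite csum_head; cycle 1.
  { intros j Hj. unfold endpoint_vec.
    destruct (Nat.eqb_spec j 0), (Nat.eqb_spec j (2 * m)); try lia.
    apply Cmult_0_l. }
  { lia. }
  unfold endpoint_vec. rewrite (Nat.eqb_refl (2 * m)).
  replace (Nat.eqb (2 * m) 0) with false by (symmetry; apply Nat.eqb_neq; lia).
  change (Nat.eqb 0 0) with true. cbv iota.
  replace (INR 0 * x) with 0 by (simpl; ring).
  replace (e2ipi 0) with (RtoC 1)
    by (unfold e2ipi; rewrite Rmult_0_r, cos_0, sin_0; reflexivity).
  rewrite Cmult_1_r. reflexivity.
Qed.

Lemma P_endpoint_vec_at_sample (m : nat) (b : C) (k : nat) : (1 <= m)%nat ->
  P (2 * m + 1) (endpoint_vec m b) (INR k / INR (2 * (2 * m + 1) - 2))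
  = Cplus 1 (Cmult b (RtoC (cos (INR k * PI)))).
Proof.
  intros hm. rewrite P_endpoint_vec by exact hm.
  replace (2 * (2 * m + 1) - 2)%nat with (2 * (2 * m))%nat by lia.
  assert (INR (2 * m) <> 0) by (apply not_0_INR; lia).
  rewrite (mult_INR 2 (2 * m)).
  replace (INR (2 * m) * (INR k / (INR 2 * INR (2 * m)))) with (INR k / 2)
    by (simpl; field; auto).
  rewrite e2ipi_half_INR. reflexivity.
Qed.

Lemma Cmod_sample_conj (b : C) (a : R) :
  Cmod (Cplus 1 (Cmult b (RtoC a))) = Cmod (Cplus 1 (Cmult (Cconj b) (RtoC a))).
Proof.
  rewrite <- Cmod_conj, Cplus_conj, Cmult_conj. f_equal.
  apply injective_projections; simpl; ring.
Qed.

Lemma Cmod_sub_endpoint_vec (m : nat) (b : C) (x y : R) : (1 <= m)%nat ->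
  Cmod (Cminus (P (2 * m + 1) (endpoint_vec m b) x) (P (2 * m + 1) (endpoint_vec m b) y))
  = Cmod b * Cmod (Cminus (e2ipi (INR (2 * m) * x)) (e2ipi (INR (2 * m) * y))).
Proof.
  intros hm. rewrite !P_endpoint_vec by exact hm. rewrite <- Cmod_mult. f_equal.
  apply injective_projections; simpl; ring.
Qed.

Lemma endpoint_vec_conj_not_unimodular_multiple (m : nat) (b : C) :
  (1 <= m)%nat -> Im b <> 0 ->
  ~ exists c : C, Cmod c = 1 /\ forall j : nat, (j < 2 * m + 1)%nat ->
      endpoint_vec m (Cconj b) j = Cmult c (endpoint_vec m b j).
Proof.
  intros hm Hb [c [_ Hc]].
  assert (Hc0 := Hc 0%nat ltac:(lia)).
  assert (Hc2m := Hc (2 * m)%nat ltac:(lia)).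
  unfold endpoint_vec in Hc0, Hc2m. simpl Nat.eqb in Hc0. rewrite Nat.eqb_refl in Hc2m.
  replace (Nat.eqb (2 * m) 0) with false in Hc2m by (symmetry; apply Nat.eqb_neq; lia).
  rewrite Cmult_1_r in Hc0. rewrite <- Hc0, Cmult_1_l in Hc2m.
  apply (f_equal snd) in Hc2m. simpl in Hc2m. unfold Im in Hb. lra.
Qed.

Theorem mainTheorem15 (m : nat) (hm : (1 <= m)%nat) :
  let N := (2 * m + 1)%nat in
  exists phi psi : nat -> C,
    (~ exists c : C, Cmod c = 1 /\
         forall j : nat, (j < N)%nat -> psi j = Cmult c (phi j)) /\
    (forall k : nat, (k <= 2 * N - 3)%nat ->
       Cmod (P N phi (INR k / INR (2 * N - 2)))
         = Cmod (P N psi (INR k / INR (2 * N - 2))) /\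
       Cmod (Cminus (P N phi (INR k / INR (2 * N - 2)))
                    (P N phi ((INR k - 1) / INR (2 * N - 2))))
         = Cmod (Cminus (P N psi (INR k / INR (2 * N - 2)))
                        (P N psi ((INR k - 1) / INR (2 * N - 2))))).
Proof.
  intros N. exists (endpoint_vec m Ci), (endpoint_vec m (Cconj Ci)). split.
  - apply endpoint_vec_conj_not_unimodular_multiple; [exact hm | simpl; lra].
  - intros k _. unfold N. split.
    + rewrite !P_endpoint_vec_at_sample by exact hm. apply Cmod_sample_conj.
    + rewrite !Cmod_sub_endpoint_vec by exact hm. rewrite Cmod_conj. reflexivity.
Qed.
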